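(* Let $\alpha\in[0,1)$ and let $n\geq f(\alpha)$ be an integer. Then $\theta(n)<\eta(n)$.
   Context: Define $f(\alpha)=14$ if $\alpha\in[0,\frac12]$, $f(\alpha)=17$ if $\alpha\in(\frac12,\frac23]$, $f(\alpha)=20$ if $\alpha\in(\frac23,\frac34]$, and $f(\alpha)=\frac{5}{1-\alpha}+1$ if $\alpha\in(\frac34,1)$. $\theta(n)$ is the largest root of $x^{3}-((\alpha+1)n+\alpha-5)x^{2}+(\alpha n^{2}+(\alpha^{2}-3\alpha-1)n-2\alpha+1)x-\alpha^{2}n^{2}+(7\alpha^{2}-5\alpha+3)n-18\alpha^{2}+29\alpha-15=0$, and $\eta(n)$ is the largest root of $x^{3}-((\alpha+1)n+\alpha-4)x^{2}+(\alpha n^{2}+(\alpha^{2}-2\alpha-1)n-2\alpha+1)x-\alpha^{2}n^{2}+(5\alpha^{2}-3\alpha+2)n-10\alpha^{2}+15\alpha-8=0$. *)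

From Stdlib Require Import Reals Lra.
Open Scope R_scope.

(* f(alpha) from the paper; only meaningful for alpha in [0,1). *)
Definition fbound (a : R) : R :=
  if Rle_dec a (1/2) then 14
  else if Rle_dec a (2/3) then 17
  else if Rle_dec a (3/4) then 20
  else 5 / (1 - a) + 1.

(* The cubic whose largest root is theta(n). *)
Definition Ptheta (a n x : R) : R :=
  x^3 - ((a+1)*n + a - 5) * x^2
  + (a*n^2 + (a^2 - 3*a - 1)*n - 2*a + 1) * x
  - a^2*n^2 + (7*a^2 - 5*a + 3)*n - 18*a^2 + 29*a - 15.

(* The cubic whose largest root is eta(n). *)
Definition Peta (a n x : R) : R :=
  x^3 - ((a+1)*n + a - 4) * x^2
  + (a*n^2 + (a^2 - 2*a - 1)*n - 2*a + 1) * x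
  - a^2*n^2 + (5*a^2 - 3*a + 2)*n - 10*a^2 + 15*a - 8.

Definition is_largest_root (p : R -> R) (r : R) : Prop :=
  p r = 0 /\ forall x, p x = 0 -> x <= r.

(* The hypothesis N >= f(a) amounts to N >= 14 and (1-a)N >= 5.
   Then Ptheta changes sign from negative at N-5 to positive on [N, +oo), so
   N-5 < theta < N.  Since Peta x = Ptheta x - x(x - aN) - c with c > 0 and
   theta > N-5 >= aN, Peta is negative at theta; as Peta N > 0, Peta has a root
   in (theta, N), whence theta < eta. *)
From Stdlib Require Import Reals Lra Psatz.
Open Scope R_scope.

Lemma largest_root_gt (p : R -> R) (r x y : R) :
  continuity p -> x < y -> p x < 0 -> 0 < p y ->
  is_largest_root p r -> x < r.
Proof.
  intros p_cont x_lt_y px_neg py_pos [_ r_max].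
  destruct (IVT p x y p_cont x_lt_y px_neg py_pos) as [z [[x_le_z _] pz0]].
  assert (x_neq_z : x <> z) by (intros <-; lra).
  pose proof (r_max z pz0); lra.
Qed.

Lemma root_lt_of_pos_from (p : R -> R) (r y : R) :
  (forall x, y <= x -> 0 < p x) -> p r = 0 -> r < y.
Proof.
  intros p_pos pr0.
  destruct (Rlt_le_dec r y) as [lt | ge]; [exact lt |].
  pose proof (p_pos r ge); lra.
Qed.

Lemma fbound_le (a N : R) :
  0 <= a < 1 -> fbound a <= N -> 14 <= N /\ 5 <= (1 - a) * N.
Proof.
  intros Ha. unfold fbound.
  destruct (Rle_dec a (1/2)); [intros; split; nra |].
  destruct (Rle_dec a (2/3)); [intros; split; nra |].
  destruct (Rle_dec a (3/4)); [intros; split; nra |].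
  intros HN.
  assert (five_div : 5 / (1 - a) * (1 - a) = 5) by (field; lra).
  assert (5 / (1 - a) * (1 - a) <= (N - 1) * (1 - a))
    by (apply Rmult_le_compat_r; lra).
  assert (20 < 5 / (1 - a)).
  { apply (Rmult_lt_reg_r (1 - a)); [lra |]. rewrite five_div. lra. }
  split; nra.
Qed.

Lemma Ptheta_continuous (a N : R) : continuity (Ptheta a N).
Proof. unfold Ptheta. reg. Qed.

Lemma Peta_continuous (a N : R) : continuity (Peta a N).
Proof. unfold Peta. reg. Qed.

Lemma Ptheta_neg (a N : R) :
  0 <= a < 1 -> 14 <= N -> 5 <= (1 - a) * N -> Ptheta a N (N - 5) < 0.
Proof. intros. unfold Ptheta. nra. Qed.

Lemma Ptheta_shift (a N t : R) :
  Ptheta a N (N + t) =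
    t ^ 3 + ((2 - a) * N - a + 5) * t ^ 2
    + ((1 - a) * N ^ 2 + (a ^ 2 - 5 * a + 9) * N - 2 * a + 1) * t
    + (4 * (1 - a) * N ^ 2 + (7 * a ^ 2 - 7 * a + 4) * N - 18 * a ^ 2 + 29 * a - 15).
Proof. unfold Ptheta. ring. Qed.

Lemma Ptheta_pos (a N x : R) :
  0 <= a < 1 -> 14 <= N -> N <= x -> 0 < Ptheta a N x.
Proof.
  intros Ha HN Hx.
  replace x with (N + (x - N)) by ring. rewrite Ptheta_shift.
  set (t := x - N).
  assert (0 < (1 - a) * N * N) by (apply Rmult_lt_0_compat; nra).
  assert (0 <= t ^ 3) by (apply pow_le; unfold t; lra).
  assert (0 <= ((2 - a) * N - a + 5) * t ^ 2)
    by (apply Rmult_le_pos; [nra | apply pow2_ge_0]).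
  assert (0 <= ((1 - a) * N ^ 2 + (a ^ 2 - 5 * a + 9) * N - 2 * a + 1) * t)
    by (apply Rmult_le_pos; unfold t; nra).
  nra.
Qed.

Lemma Peta_pos (a N : R) : 0 <= a < 1 -> 14 <= N -> 0 < Peta a N N.
Proof.
  intros Ha HN.
  replace (Peta a N N)
    with (3 * (1 - a) * N ^ 2 + (5 * a ^ 2 - 5 * a + 3) * N - 10 * a ^ 2 + 15 * a - 8)
    by (unfold Peta; ring).
  assert (0 < (1 - a) * N ^ 2) by (apply Rmult_lt_0_compat; nra).
  assert (0 <= (a - 1/2) ^ 2 * N) by (apply Rmult_le_pos; [apply pow2_ge_0 | lra]).
  nra.
Qed.

Lemma Peta_Ptheta (a N x : R) :
  Peta a N x = Ptheta a N x - x * (x - a * N)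
               - ((2 * a ^ 2 - 2 * a + 1) * N - 8 * a ^ 2 + 14 * a - 7).
Proof. unfold Ptheta, Peta. ring. Qed.

Lemma Peta_neg_at_Ptheta_root (a N x : R) :
  0 <= a < 1 -> 14 <= N -> a * N < x -> Ptheta a N x = 0 -> Peta a N x < 0.
Proof.
  intros Ha HN Hx Px0.
  rewrite Peta_Ptheta, Px0.
  assert (0 < x * (x - a * N)) by (apply Rmult_lt_0_compat; nra).
  assert (0 <= (2 * a ^ 2 - 2 * a + 1) * (N - 14)) by (apply Rmult_le_pos; nra).
  nra.
Qed.

Theorem mainTheorem3 (a : R) (n : nat) (theta eta : R) :
  0 <= a < 1 ->
  fbound a <= INR n ->
  is_largest_root (Ptheta a (INR n)) theta ->
  is_largest_root (Peta a (INR n)) eta ->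
  theta < eta.
Proof.
  intros Ha Hf Htheta Heta.
  set (N := INR n) in *.
  destruct (fbound_le a N Ha Hf) as [N_ge_14 N_gap].
  assert (theta_gt : N - 5 < theta).
  { apply (largest_root_gt (Ptheta a N) theta (N - 5) N);
      auto using Ptheta_continuous, Ptheta_neg, Ptheta_pos, Rle_refl; lra. }
  assert (theta_lt : theta < N).
  { apply (root_lt_of_pos_from (Ptheta a N)); [| apply Htheta].
    intros x; apply Ptheta_pos; assumption. }
  apply (largest_root_gt (Peta a N) eta theta N);
    auto using Peta_continuous, Peta_pos.
  apply Peta_neg_at_Ptheta_root; [assumption | assumption | nra | apply Htheta].
Qed.
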